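(* Let $\mathcal{H}$ be a Hilbert space, $D\in L(\mathcal{H})$ positive, and let $\mathcal{S}\subseteq\mathcal{T}$ be closed subspaces with $P_\mathcal{T}D=DP_\mathcal{T}$, so that $D=\begin{pmatrix} D_1&0\\0&D_2\end{pmatrix}$ with respect to $\mathcal{H}=\mathcal{T}\oplus\mathcal{T}^\perp$. Suppose $R(P_\mathcal{S}DP_\mathcal{S})$ is closed. Then $$P_{D,\mathcal{S}}=\begin{pmatrix} P_{D_1,\mathcal{S}}&0\\0&0\end{pmatrix}\quad\text{with respect to }\mathcal{T}\oplus\mathcal{T}^\perp,$$ where $P_{D_1,\mathcal{S}}$ is taken with $D_1$ regarded as an operator on the Hilbert space $\mathcal{T}$.
   Context: $P_\mathcal{M}$ denotes the orthogonal projection onto a closed subspace $\mathcal{M}$. For positive bounded $D$ on a Hilbert space $\mathcal{K}$ and a closed subspace $\mathcal{S}\subseteq\mathcal{K}$, the pair $(D,\mathcal{S})$ is compatible if there exists a bounded idempotent $Q$ on $\mathcal{K}$ with range $\mathcal{S}$ and $DQ=Q^*D$; writing $D=\begin{pmatrix} a & b\\ b^* & c\end{pmatrix}$ with respect to $\mathcal{K}=\mathcal{S}\oplus(\mathcal{K}\ominus\mathcal{S})$, this holds iff $R(b)\subseteq R(a)$, and then $P_{D,\mathcal{S}}:=\begin{pmatrix} 1 & d\\ 0&0\end{pmatrix}$, with $d$ the unique bounded operator $\mathcal{K}\ominus\mathcal{S}\to\mathcal{S}$ satisfying $ad=b$ and $R(d)\subseteq\overline{R(a)}$. When $R(a)$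 is closed the pair is compatible and $d=a^\dagger b$ (Moore–Penrose inverse). *)

From Stdlib Require Import ClassicalEpsilon.
From mathcomp Require Import all_boot all_algebra.
From mathcomp Require Import all_classical all_reals all_analysis.
From mathcomp Require Import complex.
Import Num.Theory GRing.Theory.
Set Implicit Arguments. Unset Strict Implicit. Unset Printing Implicit Defensive.
Local Open Scope ring_scope.
Local Open Scope classical_set_scope.

Record inner_product (R : realType) (H : normedModType R[i]) := InnerProduct {
  ip :> H -> H -> R[i];
  ipDl : forall x y z, ip (x + y) z = ip x z + ip y z;
  ipZl : forall (a : R[i]) x y, ip (a *: x) y = a * ip x y;
  ipC : forall x y, ip y x = (ip x y)^*;
  ip_norm : forall x, ip x x = `|x| ^+ 2
}.

Section Defs.
Context {R : realType} {H : completeNormedModType R[i]} (ip : inner_product H).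

Definition subspace (M : set H) : Prop :=
  M 0 /\ (forall (a : R[i]) x y, M x -> M y -> M (a *: x + y)).
Definition closed_subspace (M : set H) : Prop := subspace M /\ closed M.

Definition orth (M : set H) : set H := [set x | forall m, M m -> ip x m = 0].

(* P_M : the orthogonal projection onto M (the y in M with x - y orthogonal
   to M; it exists and is unique for closed subspaces of a Hilbert space). *)
Definition oproj (M : set H) (x : H) : H :=
  epsilon (inhabits 0) (fun y => M y /\ orth M (x - y)).

Definition bounded_op (A : H -> H) : Prop :=
  (forall (a : R[i]) x y, A (a *: x + y) = a *: A x + A y) /\ continuous A.

Definition positive_op (A : H -> H) : Prop :=
  bounded_op A /\ forall x, 0 <= ip (A x) x.

(* Operators on the Hilbert space K (a closed subspace of H, with the
   restricted inner product) are represented by functions H -> H, of which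
   only the values on K matter.  [bounded_on K A]: A is a bounded linear map
   from the closed subspace K into the closed subspace L. *)
Definition bounded_on (K L : set H) (A : H -> H) : Prop :=
  (forall x, K x -> L (A x)) /\
  (forall (a : R[i]) x y, K x -> K y -> A (a *: x + y) = a *: A x + A y) /\
  {within K, continuous A}.

(* Compatibility of (D, S) in the Hilbert space K (D an operator on K,
   S a closed subspace of K): there is a bounded idempotent Q on K with
   range S and D Q = Q^* D, i.e. <D Q x, y> = <D x, Q y> for x, y in K. *)
Definition compatible_in (K : set H) (D : H -> H) (S : set H) : Prop :=
  exists Q : H -> H,
    [/\ bounded_on K K Q,
        (forall x, K x -> Q (Q x) = Q x),
        Q @` K = S &
        (forall x y, K x -> K y -> ip (D (Q x)) y = ip (D x) (Q y))].

(* With respect to K = S (+) (K (-) S), D = (a b ; b^* c) with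
   a = P_S D|_S and b = P_S D|_(K(-)S).  [dfactor_in K D S d]: d is a bounded
   operator K (-) S -> S with a d = b and R(d) contained in the closure of R(a). *)
Definition dfactor_in (K : set H) (D : H -> H) (S : set H) (d : H -> H) : Prop :=
  let KmS := K `&` orth S in
  [/\ bounded_on KmS S d,
      (forall y, KmS y -> oproj S (D (d y)) = oproj S (D y)) &
      (forall y, KmS y -> closure [set oproj S (D s) | s in S] (d y))].

(* P_{D,S} in the Hilbert space K: the operator (1 d ; 0 0) w.r.t.
   K = S (+) (K (-) S), where d is the (unique) operator of [dfactor_in].
   For x in K, the S-component is P_S x and the (K(-)S)-component is x - P_S x. *)
Definition PDS_in (K : set H) (D : H -> H) (S : set H) (x : H) : H :=
  let d := epsilon (inhabits (fun _ : H => 0)) (dfactor_in K D S) in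
  oproj S x + d (x - oproj S x).

End Defs.

(* Let a = P_S D|_S and M = R(a), closed by hypothesis.  Positivity makes a
   injective on M: if s is in S and P_S D s = 0 then <D s, s> = 0, so D s = 0.
   Moreover R(P_S D) is contained in M: the component r of P_S D y orthogonal
   to M satisfies P_S D r = 0, hence D r = 0 and <P_S D y, r> = <y, D r> = 0.
   So a restricts to a bijection of M whose inverse g is symmetric, hence
   bounded (Hellinger-Toeplitz, via Banach-Steinhaus).  Then d = g P_S D is the
   operator of P_{D,S} = P_S + d (1 - P_S), and it is the unique solution of
   a d = b with range in M.  This characterisation only involves <D x, y> for
   x, y in the ambient space K containing S, so P_{D,S} computed in T for
   D_1 = P_T D coincides with P_{D,S} computed in H; on the orthogonal of T
   both P_S and P_S D vanish because D commutes with P_T. *)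

From Pilot Require Import Defs.
From HB Require Import structures.
From mathcomp Require Import all_boot all_order all_algebra.
From mathcomp Require Import all_classical all_reals all_analysis.
From mathcomp Require Import complex.
From mathcomp Require Import ring lra.
From Stdlib Require Import ClassicalEpsilon.
Import Order.TTheory Num.Theory GRing.Theory.
Set Implicit Arguments. Unset Strict Implicit. Unset Printing Implicit Defensive.
Local Open Scope complex_scope.
Local Open Scope ring_scope.
Local Open Scope classical_set_scope.

Section RealNorm.
Variables (R : realType) (H : normedModType R[i]).

Definition rnorm (x : H) : R := complex.Re `|x|.

Lemma rnormE x : `|x| = (rnorm x)%:C.
Proof. by rewrite /rnorm RRe_real // ger0_real. Qed.

Lemma rnorm_ge0 x : 0 <= rnorm x.
Proof. by rewrite -ler0c -rnormE. Qed.

Lemma rnormD x y : rnorm (x + y) <= rnorm x + rnorm y.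
Proof. by rewrite -lecR rmorphD /= -!rnormE ler_normD. Qed.

Lemma rnormN x : rnorm (- x) = rnorm x.
Proof. by rewrite /rnorm normrN. Qed.

Lemma rnorm_eq0 x : (rnorm x == 0) = (x == 0).
Proof. by rewrite -[x == 0]normr_eq0 rnormE -(inj_eq (@complexI R)). Qed.

Lemma rnorm0_eq0 x : rnorm x = 0 -> x = 0.
Proof. by move/eqP; rewrite rnorm_eq0 => /eqP. Qed.

Lemma rnorm_gt0 x : x != 0 -> 0 < rnorm x.
Proof. by move=> x0; rewrite lt_def rnorm_eq0 x0 rnorm_ge0. Qed.

Lemma rnormZ (a : R[i]) x : rnorm (a *: x) = complex.Re `|a| * rnorm x.
Proof.
by apply: complexI; rewrite rmorphM /= -rnormE RRe_real ?normrZ -?rnormE // ger0_real.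
Qed.

Lemma rnormZ_real (c : R) x : rnorm (c%:C *: x) = `|c| * rnorm x.
Proof. by rewrite rnormZ; congr (_ * _); rewrite normc_def /= expr0n /= addr0 sqrtr_sqr. Qed.

Lemma rnorm_ltE x (e : R) : (`|x| < e%:C) = (rnorm x < e).
Proof. by rewrite rnormE ltcR. Qed.

End RealNorm.

Lemma gtc0_real (R : realType) (e : R[i]) : 0 < e -> e = (complex.Re e)%:C /\ 0 < complex.Re e.
Proof. by case: e => a b; rewrite ltcE /= => /andP[/eqP -> ->]. Qed.

(* Restriction of scalars to R: the Banach-Steinhaus theorem of the library is
   stated for normed spaces over a realType. *)
Definition realified (R : realType) (H : completeNormedModType R[i]) : Type := H.

HB.instance Definition _ (R : realType) (H : completeNormedModType R[i]) :=
  Choice.on (realified H).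
HB.instance Definition _ (R : realType) (H : completeNormedModType R[i]) :=
  GRing.Zmodule.on (realified H).

Section Realified.
Variables (R : realType) (H : completeNormedModType R[i]).

Definition real_scale (r : R) (x : realified H) : realified H := r%:C *: (x : H).

Lemma real_scaleA a b v : real_scale a (real_scale b v) = real_scale (a * b) v.
Proof. by rewrite /real_scale scalerA rmorphM. Qed.
Lemma real_scale1 v : real_scale 1 v = v.
Proof. exact: scale1r. Qed.
Lemma real_scaleDr a u v : real_scale a (u + v) = real_scale a u + real_scale a v.
Proof. exact: scalerDr. Qed.
Lemma real_scaleDl v a b : real_scale (a + b) v = real_scale a v + real_scale b v.
Proof. by rewrite /real_scale rmorphD scalerDl. Qed.

End Realified.

HB.instance Definition _ (R : realType) (H : completeNormedModType R[i]) :=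
  @GRing.Zmodule_isLmodule.Build R (realified H) (@real_scale R H)
    (@real_scaleA R H) (@real_scale1 R H) (@real_scaleDr R H) (@real_scaleDl R H).

HB.instance Definition _ (R : realType) (H : completeNormedModType R[i]) :=
  @Lmodule_isNormed.Build R (realified H) (@rnorm R H) (@rnormD R H)
    (@rnormZ_real R H) (@rnorm0_eq0 R H).

Section RealNormTopology.
Variables (R : realType) (H : completeNormedModType R[i]).

Lemma realified_complete (F : set_system (realified H)) :
  ProperFilter F -> cauchy F -> cvg F.
Proof.
move=> FF /cauchyP Fc.
have FcH : cauchy (F : set_system H).
  apply: cauchy_exP => e /gtc0_real [-> e0].
  have [x Fx] := Fc _ e0; exists x.
  by apply: filterS Fx => y; rewrite -!ball_normE /= rnorm_ltE.
have /cvg_ex [l Fl] := @cauchy_cvg H (F : set_system H) FF FcH.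
apply/cvg_ex; exists (l : realified H); apply/fcvgrPdist_lt => e e0.
move/fcvgrPdist_lt: Fl => /(_ e%:C); rewrite ltcR => /(_ e0).
by apply: filterS => y; rewrite rnorm_ltE.
Qed.

Lemma continuous_rnormP (f : H -> H) : continuous f <->
  forall x e, 0 < e -> exists2 d, 0 < d & forall y, rnorm (x - y) < d -> rnorm (f x - f y) < e.
Proof.
split=> [fc x e e0|fc x].
- move/cvgrPdist_lt: (fc x) => /(_ e%:C); rewrite ltcR => /(_ e0) /nbhs_normP [d d0 dA].
  have [dE {}d0] := gtc0_real d0.
  exists (complex.Re d) => // y xy; rewrite -rnorm_ltE; apply: dA.
  by rewrite /ball_ /= dE rnorm_ltE.
- apply/cvgrPdist_lt => e /gtc0_real [-> e0]; have [d d0 dA] := fc x _ e0.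
  apply/nbhs_normP; exists d%:C; first by rewrite /= ltcR.
  by move=> y; rewrite /ball_ /= !rnorm_ltE; exact: dA.
Qed.

Lemma lipschitz_on_comp_continuous (f h : H -> H) (M : set H) (C : R) :
  continuous f -> (forall x, M (f x)) ->
  (forall u v, M u -> M v -> rnorm (h u - h v) <= C * rnorm (u - v)) ->
  continuous (h \o f).
Proof.
move=> /continuous_rnormP fc fM hC; apply/continuous_rnormP => x e e0.
have C1 : 0 < `|C| + 1 by rewrite ltr_wpDl.
have [d d0 fd] := fc x (e / (`|C| + 1)) (divr_gt0 e0 C1).
exists d => // y /fd; rewrite ltr_pdivlMr // => fxy.
apply: le_lt_trans (hC _ _ (fM x) (fM y)) _; apply: le_lt_trans fxy.
by have := ler_norm C; have := rnorm_ge0 (f x - f y); nra.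
Qed.

Lemma cvg_rnormP (u : nat -> H) (l : H) : u @ \oo --> l <->
  forall e, 0 < e -> exists N, forall n, (N <= n)%N -> rnorm (l - u n) < e.
Proof.
split=> [/cvgrPdist_lt ul e e0|ul].
- move: (ul e%:C); rewrite ltcR => /(_ e0) [N _ uN].
  by exists N => n /uN /=; rewrite rnorm_ltE.
- apply/cvgrPdist_lt => e /gtc0_real [-> e0]; have [N uN] := ul _ e0.
  by exists N => // n /uN /=; rewrite rnorm_ltE.
Qed.

Lemma cauchy_rnorm_cvg (u : nat -> H) :
  (forall e, 0 < e -> exists N, forall n m, (N <= n)%N -> (N <= m)%N -> rnorm (u n - u m) < e) ->
  exists l : H, u @ \oo --> l.
Proof.
move=> uc; have : cauchy (u @ \oo).
  apply: cauchy_exP => e /gtc0_real [-> e0].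
  have [N uN] := uc _ e0; exists (u N); exists N => // n /= Nn.
  by rewrite -ball_normE /= rnorm_ltE; apply: uN.
by move/cauchy_cvg/cvg_ex.
Qed.

End RealNormTopology.

HB.instance Definition _ (R : realType) (H : completeNormedModType R[i]) :=
  Uniform_isComplete.Build (realified H) (@realified_complete R H).

Lemma realcD (R : realType) (a b : R) : (a + b)%:C = a%:C + b%:C.
Proof. exact: rmorphD. Qed.
Lemma realcM (R : realType) (a b : R) : (a * b)%:C = a%:C * b%:C.
Proof. exact: rmorphM. Qed.
Lemma realcV (R : realType) (a : R) : a^-1%:C = a%:C^-1.
Proof. exact: fmorphV. Qed.
Lemma realc2 (R : realType) : 2%:C = 2 :> R[i].
Proof. exact: (rmorph_nat (real_complex R) 2). Qed.

Lemma normc_real (R : realType) (z : R[i]) : `|z| = (complex.Re `|z|)%:C.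
Proof. by rewrite RRe_real // ger0_real. Qed.

Lemma ReD (R : realType) (z w : R[i]) : complex.Re (z + w) = complex.Re z + complex.Re w.
Proof. by case: z; case: w. Qed.

Lemma Re_realM (R : realType) (a : R) (z : R[i]) : complex.Re (a%:C * z) = a * complex.Re z.
Proof. by case: z => x y; rewrite /= mul0r subr0. Qed.

Lemma Re_norm_le (R : realType) (z : R[i]) : `|complex.Re z| <= complex.Re `|z|.
Proof. by rewrite -lecR -normc_real normc_ge_Re. Qed.

Section InnerProduct.
Variables (R : realType) (H : normedModType R[i]) (ip : inner_product H).

Lemma ip0l y : ip 0 y = 0.
Proof. by have := ipZl ip 0 0 y; rewrite scale0r mul0r. Qed.
Lemma ipNl x y : ip (- x) y = - ip x y.
Proof. by rewrite -scaleN1r ipZl mulN1r. Qed.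
Lemma ipBl x z y : ip (x - z) y = ip x y - ip z y.
Proof. by rewrite ipDl ipNl. Qed.
Lemma ipDr x y z : ip x (y + z) = ip x y + ip x z.
Proof. by rewrite [LHS]ipC ipDl rmorphD /= -!ipC. Qed.
Lemma ipZr a x y : ip x (a *: y) = a^* * ip x y.
Proof. by rewrite [LHS]ipC ipZl rmorphM /= -!ipC. Qed.
Lemma ip0r x : ip x 0 = 0.
Proof. by rewrite [LHS]ipC ip0l conjC0. Qed.
Lemma ipNr x y : ip x (- y) = - ip x y.
Proof. by rewrite [LHS]ipC ipNl rmorphN /= -ipC. Qed.

Lemma ipxx x : ip x x = (rnorm x ^+ 2)%:C.
Proof. by rewrite ip_norm rnormE rmorphXn. Qed.

Lemma ipxx_eq0 x : ip x x = 0 -> x = 0.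
Proof.
rewrite ipxx => /eqP; rewrite -(rmorph0 (real_complex R)) (inj_eq (@complexI _)).
by rewrite expf_eq0 /= rnorm_eq0 => /eqP.
Qed.

Lemma pythagoras a b : ip a b = 0 -> rnorm (a + b) ^+ 2 = rnorm a ^+ 2 + rnorm b ^+ 2.
Proof.
move=> ab0; apply: complexI; rewrite rmorphD /= -!ipxx ipDl !ipDr ab0.
by rewrite [ip b a]ipC ab0 conjC0 !addr0 add0r.
Qed.

Lemma parallelogram (a b : H) :
  rnorm (a + b) ^+ 2 + rnorm (a - b) ^+ 2 = 2 * rnorm a ^+ 2 + 2 * rnorm b ^+ 2.
Proof.
apply: complexI; rewrite !realcD !(realcM 2) realc2 -!ipxx.
by rewrite !ipDl !ipNl !ipDr !ipNr; ring.
Qed.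

Lemma pythagoras_component x y (t := ip x y / ip y y) : y != 0 ->
  rnorm x ^+ 2 = rnorm (x - t *: y) ^+ 2 + rnorm (t *: y) ^+ 2.
Proof.
move=> y0; have yy0 : ip y y != 0 by apply: contra_neq y0; exact: ipxx_eq0.
have o : ip (x - t *: y) (t *: y) = 0 by rewrite ipZr ipBl ipZl /t divfK // subrr mulr0.
by rewrite -pythagoras // subrK.
Qed.

Lemma cauchy_schwarz x y : complex.Re `|ip x y| <= rnorm x * rnorm y.
Proof.
have [->|y0] := eqVneq y 0; first by rewrite ip0r /rnorm !normr0 mulr0.
have ny := rnorm_gt0 y0.
have tyx : rnorm ((ip x y / ip y y) *: y) <= rnorm x.
  rewrite -(@ler_pXn2r _ 2) ?nnegrE ?rnorm_ge0 // (pythagoras_component x y0).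
  by rewrite lerDr sqr_ge0.
rewrite -ler_pdivrMr //; apply: le_trans tyx; rewrite rnormZ normf_div ipxx.
rewrite [`|(_ ^+ 2)%:C|]ger0_norm ?ler0c ?sqr_ge0 // normc_real -realcV -realcM /=.
by rewrite expr2 invfM mulrA mulfVK ?gt_eqF.
Qed.

End InnerProduct.

Section Subspace.
Variables (R : realType) (H : completeNormedModType R[i]) (M : set H).
Hypothesis hM : Defs.subspace M.

Lemma subspace0 : M 0. Proof. exact: hM.1. Qed.
Lemma subspaceD x y : M x -> M y -> M (x + y).
Proof. by move=> Mx My; have := hM.2 1 x y Mx My; rewrite scale1r. Qed.
Lemma subspaceZ a x : M x -> M (a *: x).
Proof. by move=> Mx; have := hM.2 a x 0 Mx subspace0; rewrite addr0. Qed.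
Lemma subspaceB x y : M x -> M y -> M (x - y).
Proof. by move=> Mx My; rewrite -scaleN1r addrC; apply: hM.2. Qed.

End Subspace.

Section OrthogonalProjection.
Variables (R : realType) (H : completeNormedModType R[i]) (ip : inner_product H).

Lemma oproj_eq (M : set H) x y :
  Defs.subspace M -> M y -> orth ip M (x - y) -> oproj ip M x = y.
Proof.
move=> hM My xy.
have [Mz xz] : M (oproj ip M x) /\ orth ip M (x - oproj ip M x).
  exact: (epsilon_spec (inhabits 0) (fun z => M z /\ orth ip M (x - z))
    (ex_intro _ y (conj My xy))).
set z := oproj ip M x in Mz xz *; have Mzy := subspaceB hM Mz My.
apply/eqP; rewrite -subr_eq0; apply/eqP; apply: (ipxx_eq0 (ip := ip)).
rewrite -{1}[z - y](_ : (x - y) - (x - z) = z - y); last first.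
  by rewrite opprB addrC addrA subrK.
by rewrite ipBl xy // xz // subrr.
Qed.

Lemma min_dist_orth (M : set H) x y : Defs.subspace M -> M y ->
  (forall m, M m -> rnorm (x - y) <= rnorm (x - m)) -> orth ip M (x - y).
Proof.
move=> hM My ymin z Mz; have [->|z0] := eqVneq z 0; first exact: ip0r.
set w := x - y; set t := ip w z / ip z z.
have zz0 : ip z z != 0 by apply: contra_neq z0; exact: ipxx_eq0.
have : rnorm (t *: z) ^+ 2 <= 0.
  have := ymin _ (subspaceD hM My (subspaceZ hM t Mz)).
  rewrite opprD addrA -/w -(@ler_pXn2r _ 2) ?nnegrE ?rnorm_ge0 //.
  by rewrite (pythagoras_component ip w z0) -/t => ?; lra.
move=> tz; have : rnorm (t *: z) ^+ 2 == 0 by rewrite eq_le tz sqr_ge0.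
rewrite sqrf_eq0 rnorm_eq0 scaler_eq0 (negPf z0) orbF mulf_eq0 invr_eq0.
by rewrite (negPf zz0) orbF => /eqP.
Qed.

Lemma minimizing_cauchy (M : set H) x (d : R) (m : nat -> H) :
  Defs.subspace M -> 0 <= d -> (forall z, M z -> d <= rnorm (x - z)) ->
  (forall n, M (m n)) -> (forall n, rnorm (x - m n) < d + n.+1%:R^-1) ->
  forall e, 0 < e -> exists N, forall n k, (N <= n)%N -> (N <= k)%N -> rnorm (m n - m k) < e.
Proof.
move=> hM d0 dmin mM mx e e0.
have [N] : exists N, 0 + N.+1%:R^-1 < e ^+ 2 / (8 * d + 4).
  by apply: ltr_add_invr; rewrite divr_gt0 ?exprn_gt0 //; lra.
rewrite add0r ltr_pdivlMr; last lra.
set eta := N.+1%:R^-1 => etaN; exists N => n k Nn Nk.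
have eta_ge (j : nat) : (N <= j)%N -> j.+1%:R^-1 <= eta.
  by move=> Nj; rewrite lef_pV2 ?posrE ?ltr0Sn // ler_nat ltnS.
have eta01 : 0 <= eta <= 1 by rewrite invr_ge0 ler0n invf_le1 ?ltr0Sn // ler1n.
set a := x - m n; set b := x - m k.
have ab_ge : 2 * d <= rnorm (a + b).
  have -> : a + b = 2%:C *: (x - 2^-1 *: (m n + m k)).
    rewrite realc2 scalerBr scalerA mulfV ?pnatr_eq0 // scale1r scaler_nat mulr2n.
    by rewrite opprD addrACA.
  rewrite rnormZ_real ger0_norm // ler_pM2l //.
  by apply/dmin/(subspaceZ hM)/(subspaceD hM).
have a_lt : rnorm a < d + eta by apply: lt_le_trans (mx n) _; rewrite lerD2l eta_ge.
have b_lt : rnorm b < d + eta by apply: lt_le_trans (mx k) _; rewrite lerD2l eta_ge.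
have := parallelogram ip a b; have -> : a - b = - (m n - m k).
  by rewrite /a /b opprB addrC addrA subrK opprB.
rewrite rnormN => par.
rewrite -(@ltr_pXn2r _ 2) ?nnegrE ?rnorm_ge0 ?ltW //.
have := rnorm_ge0 a; have := rnorm_ge0 b; nra.
Qed.

Lemma min_dist_exists (M : set H) x : closed_subspace M ->
  exists2 y, M y & forall z, M z -> rnorm (x - y) <= rnorm (x - z).
Proof.
move=> [hM cM]; pose E := [set rnorm (x - z) | z in M].
have E0 : E !=set0 by exists (rnorm (x - 0)), 0 => //; exact: subspace0.
have hE : has_inf E by split => //; exists 0 => _ [z _ <-]; exact: rnorm_ge0.
set d := inf E.
have dmin z : M z -> d <= rnorm (x - z) by move=> Mz; apply: (ge_inf hE.2); exists z.
have d0 : 0 <= d by apply: lb_le_inf => // _ [z _ <-]; exact: rnorm_ge0.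
have /boolp.choice [m mM] : forall n, exists z, M z /\ rnorm (x - z) < d + n.+1%:R^-1.
  move=> n; have n0 : 0 < n.+1%:R^-1 :> R by rewrite invr_gt0 ltr0Sn.
  by have [_ [z Mz <-] ?] := inf_adherent n0 hE; exists z.
have [y my] := cauchy_rnorm_cvg
  (minimizing_cauchy hM d0 dmin (fun n => (mM n).1) (fun n => (mM n).2)).
have My : M y by apply: (closed_cvg _ cM _ _ my); apply: nearW => n; exact: (mM n).1.
exists y => // z Mz; apply: le_trans (dmin _ Mz); apply/ler_addgt0Pr => e e0.
have e2 : 0 < e / 2 by rewrite divr_gt0.
have [N1] := ltr_add_invr e2; rewrite add0r => N1e.
have [N2 N2y] := (cvg_rnormP m y).1 my _ e2.
set n := maxn N1 N2.
have nN1 : n.+1%:R^-1 <= N1.+1%:R^-1 :> R.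
  by rewrite lef_pV2 ?posrE ?ltr0Sn // ler_nat ltnS leq_maxl.
have := rnormD (x - m n) (m n - y); rewrite addrA subrK.
have := N2y n (leq_maxr _ _); rewrite -rnormN opprB.
have := (mM n).2; move: N1e nN1.
set p := n.+1%:R^-1; set q := N1.+1%:R^-1; clearbody p q; lra.
Qed.

Lemma oproj_spec (M : set H) x : closed_subspace M ->
  M (oproj ip M x) /\ orth ip M (x - oproj ip M x).
Proof.
move=> hM; have [y My ymin] := min_dist_exists x hM.
exact: (epsilon_spec (inhabits 0) (fun z => M z /\ orth ip M (x - z))
  (ex_intro _ y (conj My (min_dist_orth hM.1 My ymin)))).
Qed.

End OrthogonalProjection.

Section ProjectionTheory.
Variables (R : realType) (H : completeNormedModType R[i]) (ip : inner_product H).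
Variable M : set H.
Hypothesis hM : closed_subspace M.
Local Notation P := (oproj ip M).

Lemma oproj_in x : M (P x). Proof. exact: (oproj_spec ip x hM).1. Qed.
Lemma oproj_orth x : orth ip M (x - P x). Proof. exact: (oproj_spec ip x hM).2. Qed.

Lemma oproj_id m : M m -> P m = m.
Proof. by move=> Mm; apply: oproj_eq hM.1 Mm _ => z _; rewrite subrr ip0l. Qed.

Lemma oproj0 : P 0 = 0. Proof. exact: oproj_id (subspace0 hM.1). Qed.

Lemma oproj_eq0 x : orth ip M x -> P x = 0.
Proof. by move=> Mx; apply: oproj_eq hM.1 (subspace0 hM.1) _; rewrite subr0. Qed.

Lemma oproj_lin a x y : P (a *: x + y) = a *: P x + P y.
Proof.
apply: oproj_eq hM.1 _ _; first by apply/(subspaceD hM.1)/oproj_in/(subspaceZ hM.1)/oproj_in.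
move=> m Mm; have -> : a *: x + y - (a *: P x + P y) = a *: (x - P x) + (y - P y).
  by rewrite scalerBr opprD addrACA.
by rewrite ipDl ipZl !oproj_orth // mulr0 addr0.
Qed.

Lemma oprojB x y : P (x - y) = P x - P y.
Proof. by rewrite -scaleN1r addrC oproj_lin scaleN1r addrC. Qed.

Lemma ip_oprojl x m : M m -> ip x m = ip (P x) m.
Proof. by move=> Mm; apply/eqP; rewrite -subr_eq0 -ipBl oproj_orth. Qed.

Lemma ip_oprojr x m : M m -> ip m x = ip m (P x).
Proof. by move=> Mm; rewrite ipC (ip_oprojl _ Mm) -ipC. Qed.

Lemma rnorm_oproj_le x : rnorm (P x) <= rnorm x.
Proof.
have o : ip (P x) (x - P x) = 0.
  by rewrite ipC oproj_orth ?conjC0 //; exact: oproj_in.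
rewrite -(@ler_pXn2r _ 2) ?nnegrE ?rnorm_ge0 //.
by rewrite -[in leRHS](subrK (P x) x) addrC (pythagoras o) lerDl sqr_ge0.
Qed.

Lemma continuous_oproj : continuous P.
Proof.
suff : continuous (P \o id) by [].
apply: (lipschitz_on_comp_continuous (M := setT) (C := 1)) => // [x|u v _ _].
  exact: cvg_id.
by rewrite -oprojB mul1r rnorm_oproj_le.
Qed.

End ProjectionTheory.

Lemma quadratic_ge0_lin_eq0 (R : realType) (A B : R) :
  0 <= B -> (forall t, 0 <= 2 * t * A + t ^+ 2 * B) -> A = 0.
Proof.
move=> B0 /(_ (- A / (B + 1))); have B1 : B + 1 != 0 by rewrite gt_eqF //; lra.
have -> : 2 * (- A / (B + 1)) * A + (- A / (B + 1)) ^+ 2 * B =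
          - (A ^+ 2 * (B + 2)) / (B + 1) ^+ 2 by field.
rewrite pmulr_lge0 ?invr_gt0 ?exprn_gt0 //; last lra.
rewrite oppr_ge0 pmulr_lle0; last lra.
by move=> A2; apply/eqP; rewrite -sqrf_eq0 eq_le A2 sqr_ge0.
Qed.

Section PositiveOperator.
Variables (R : realType) (H : completeNormedModType R[i]) (ip : inner_product H).
Variable D : H -> H.
Hypothesis hD : positive_op ip D.

Lemma posop_lin a x y : D (a *: x + y) = a *: D x + D y. Proof. exact: hD.1.1. Qed.
Lemma posop0 : D 0 = 0.
Proof. by have := posop_lin (-1) 0 0; rewrite !scaleN1r !addNr. Qed.
Lemma posopD x y : D (x + y) = D x + D y.
Proof. by have := posop_lin 1 x y; rewrite !scale1r. Qed.
Lemma posopZ a x : D (a *: x) = a *: D x.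
Proof. by rewrite -[a *: x]addr0 posop_lin posop0 addr0. Qed.
Lemma posopB x y : D (x - y) = D x - D y.
Proof. by rewrite -scaleN1r addrC posop_lin scaleN1r addrC. Qed.

Lemma posop_real x : (ip (D x) x)^* = ip (D x) x.
Proof. exact/conj_Creal/ger0_real/hD.2. Qed.

Lemma posop_sym x y : ip (D x) y = ip x (D y).
Proof.
set p := ip (D x) y; set r := ip (D y) x; rewrite [ip x _]ipC -/r.
have e1 : (p + r)^* = p + r.
  have := posop_real (x + y); rewrite posopD !ipDl !ipDr !rmorphD /= !posop_real -/p -/r.
  move=> e.
  transitivity (ip (D x) x + p^* + (r^* + ip (D y) y) - (ip (D x) x + ip (D y) y)); first ring.
  by rewrite e; ring.
have e2 : ('i * (r - p))^* = 'i * (r - p).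
  have := posop_real (x + 'i *: y).
  rewrite posopD posopZ !ipDl !ipDr !ipZl !ipZr -/p -/r !rmorphD !rmorphM /= !posop_real.
  rewrite conjCK conjCi => e; rewrite rmorphB.
  transitivity (ip (D x) x + 'i * p^* + (- 'i * r^* + - 'i * ('i * ip (D y) y))
                - ip (D x) x + 'i * ('i * ip (D y) y)); first ring.
  by rewrite e; ring.
have e3 : r - p = p^* - r^*.
  by apply: (mulfI (neq0Ci _)); rewrite -e2 rmorphM rmorphB /= conjCi; ring.
apply: (@mulfI _ 2); first by rewrite pnatr_eq0.
transitivity ((p + r) - (r - p)); first ring.
by rewrite e3 -{1}e1 rmorphD; ring.
Qed.

Lemma posop_ker x : ip (D x) x = 0 -> D x = 0.
Proof.
move=> x0; set v := D x; set B := complex.Re (ip (D v) v).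
have vv : ip (D v) v = B%:C by rewrite /B RRe_real // ger0_real // hD.2.
have B0 : 0 <= B by rewrite -ler0c -vv hD.2.
apply/rnorm0_eq0/eqP; rewrite -sqrf_eq0; apply/eqP.
apply: (quadratic_ge0_lin_eq0 B0) => t; rewrite -ler0c.
have := hD.2 (x + t%:C *: v).
rewrite posopD posopZ !ipDl !ipDr !ipZl !ipZr x0 vv [ip (D v) x]posop_sym -/v ipxx.
rewrite conj_Creal ?complex_real // !realcD !realcM realc2 => /le_trans; apply.
by rewrite le_eqVlt; apply/orP; left; apply/eqP; ring.
Qed.

End PositiveOperator.

Section Compression.
Variables (R : realType) (H : completeNormedModType R[i]) (ip : inner_product H).
Variables (D : H -> H) (S : set H).
Hypothesis hD : positive_op ip D.
Hypothesis hS : closed_subspace S.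
Local Notation PS := (oproj ip S).

Definition compression_range : set H := [set PS (D s) | s in S].
Local Notation M := compression_range.

Lemma compression_rangeE : M = range (fun x => PS (D (PS x))).
Proof.
apply/seteqP; split=> _ [x Sx <-]; last by exists (PS x) => //; exact: oproj_in.
by exists x => //; rewrite (oproj_id ip hS Sx).
Qed.

Lemma oproj_posop_lin a x y : PS (D (a *: x + y)) = a *: PS (D x) + PS (D y).
Proof. by rewrite (posop_lin hD) (oproj_lin ip hS). Qed.
Lemma oproj_posop0 : PS (D 0) = 0.
Proof. by rewrite (posop0 hD) (oproj0 ip hS). Qed.
Lemma oproj_posopB x y : PS (D (x - y)) = PS (D x) - PS (D y).
Proof. by rewrite (posopB hD) (oprojB ip hS). Qed.

Lemma compression_range_S m : M m -> S m.
Proof. by case=> s _ <-; exact: oproj_in. Qed.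

Lemma compression_range_subspace : Defs.subspace M.
Proof.
split; first by exists 0; [exact: (subspace0 hS.1) | exact: oproj_posop0].
move=> a _ _ [s1 Ss1 <-] [s2 Ss2 <-]; exists (a *: s1 + s2); last exact: oproj_posop_lin.
exact/(subspaceD hS.1)/Ss2/(subspaceZ hS.1).
Qed.

Lemma posop_eq0_on_S s : S s -> PS (D s) = 0 -> D s = 0.
Proof. by move=> Ss Ds0; apply: (posop_ker hD); rewrite (ip_oprojl ip hS _ Ss) Ds0 ip0l. Qed.

Lemma oproj_posop_orth r : S r -> orth ip M r -> PS (D r) = 0.
Proof.
move=> Sr rM; apply: (ipxx_eq0 (ip := ip)); set u := PS (D r).
rewrite -(ip_oprojl ip hS _ (oproj_in ip hS _)) (posop_sym hD) (ip_oprojr ip hS _ Sr).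
by rewrite rM //; exists u => //; exact: oproj_in.
Qed.

Lemma compression_inj m : M m -> PS (D m) = 0 -> m = 0.
Proof.
move=> [s Ss <-] Dm0; apply: (ipxx_eq0 (ip := ip)).
have Sm := oproj_in ip hS (D s).
by rewrite -(ip_oprojl ip hS _ Sm) (posop_sym hD) (posop_eq0_on_S Sm Dm0) ip0r.
Qed.

End Compression.

Section CompressionInverse.
Variables (R : realType) (H : completeNormedModType R[i]) (ip : inner_product H).
Variables (D : H -> H) (S : set H).
Hypothesis hD : positive_op ip D.
Hypothesis hS : closed_subspace S.
Local Notation PS := (oproj ip S).
Local Notation M := (compression_range ip D S).
Hypothesis hMc : closed M.

Let hM : closed_subspace M := conj (compression_range_subspace hD hS) hMc.

Lemma oproj_posop_in_range y : M (PS (D y)).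
Proof.
set z := PS (D y); set w := oproj ip M z; set r := z - w.
have Mw : M w by exact: oproj_in.
have Sr : S r := subspaceB hS.1 (oproj_in ip hS _) (compression_range_S hS Mw).
have Dr : D r = 0.
  exact/(posop_eq0_on_S hD hS Sr)/(oproj_posop_orth hD hS Sr)/(oproj_orth ip hM).
have zr : ip z r = 0 by rewrite -(ip_oprojl ip hS _ Sr) (posop_sym hD) Dr ip0r.
have wr : ip w r = 0 by rewrite ipC oproj_orth ?conjC0.
have r0 : r = 0 by apply: (ipxx_eq0 (ip := ip)); rewrite {1}/r ipBl zr wr subrr.
by rewrite -[z](subrK w) -/r r0 add0r.
Qed.

Lemma compression_onto u : M u -> exists z, M z /\ PS (D z) = u.
Proof.
move=> [s Ss <-]; set z := oproj ip M s; exists z; split; first exact: oproj_in.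
have Ssz := subspaceB hS.1 Ss (compression_range_S hS (oproj_in ip hM s)).
have /eqP := oproj_posop_orth hD hS Ssz (oproj_orth ip hM s).
by rewrite (oproj_posopB hD hS) subr_eq0 => /eqP.
Qed.

Definition compression_inv (u : H) : H :=
  epsilon (inhabits 0) (fun z => M z /\ PS (D z) = u).
Local Notation g := compression_inv.

Lemma compression_invP u : M u -> M (g u) /\ PS (D (g u)) = u.
Proof. by move=> Mu; exact: (epsilon_spec _ _ (compression_onto Mu)). Qed.

Lemma compression_inv_eq u z : M z -> PS (D z) = u -> g u = z.
Proof.
move=> Mz Dz; have Mu : M u by rewrite -Dz; exact: oproj_posop_in_range.
have [Mg Dg] := compression_invP Mu.
apply/eqP; rewrite -subr_eq0; apply/eqP; apply: (compression_inj hD hS).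
  exact: (subspaceB hM.1).
by rewrite (oproj_posopB hD hS) Dg Dz subrr.
Qed.

Lemma compression_inv_lin a u v : M u -> M v -> g (a *: u + v) = a *: g u + g v.
Proof.
move=> Mu Mv; have [Mgu Dgu] := compression_invP Mu; have [Mgv Dgv] := compression_invP Mv.
apply: compression_inv_eq; first exact/(subspaceD hM.1)/Mgv/(subspaceZ hM.1).
by rewrite (oproj_posop_lin hD hS) Dgu Dgv.
Qed.

Lemma compression_invB u v : M u -> M v -> g (u - v) = g u - g v.
Proof.
move=> Mu Mv; rewrite -scaleN1r addrC compression_inv_lin // scaleN1r.
by rewrite addrC.
Qed.

Lemma compression_inv0 : g 0 = 0.
Proof. exact: compression_inv_eq (subspace0 hM.1) (oproj_posop0 hD hS). Qed.

Lemma compression_inv_sym u v : M u -> M v -> ip (g u) v = ip u (g v).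
Proof.
move=> Mu Mv; have [Mgu Dgu] := compression_invP Mu; have [Mgv Dgv] := compression_invP Mv.
have Sgu := compression_range_S hS Mgu; have Sgv := compression_range_S hS Mgv.
rewrite -{1}Dgv -(ip_oprojr ip hS _ Sgu) -(posop_sym hD).
by rewrite (ip_oprojl ip hS _ Sgv) Dgu.
Qed.

End CompressionInverse.

Section CompressionInverseBound.
Variables (R : realType) (H : completeNormedModType R[i]) (ip : inner_product H).
Variables (D : H -> H) (S : set H).
Hypothesis hD : positive_op ip D.
Hypothesis hS : closed_subspace S.
Local Notation M := (compression_range ip D S).
Hypothesis hMc : closed M.
Local Notation g := (compression_inv ip D S).

Let hM : closed_subspace M := conj (compression_range_subspace hD hS) hMc.
Let Mg u : M u -> M (g u) := fun Mu => (compression_invP hD hS hMc Mu).1.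

(* Hellinger-Toeplitz: the family of functionals v |-> Re <v, g u>, u in the
   unit ball of M, is pointwise bounded because g is symmetric. *)
Lemma compression_inv_unit_bounded :
  exists C, forall u, M u -> rnorm u <= 1 -> rnorm (g u) <= C.
Proof.
pose f u (v : realified H) : R^o := complex.Re (ip v (g u)).
pose F := [set f u | u in [set u | M u /\ rnorm u <= 1]].
have hF h : F h -> bounded_fun_norm h /\ linear h.
  move=> [u [Mu _] <-]; split.
  - move=> r; exists (r * rnorm (g u)) => x xr.
    apply: le_trans (Re_norm_le _) _; apply: le_trans (cauchy_schwarz ip x (g u)) _.
    by rewrite ler_wpM2r ?rnorm_ge0.
  - by move=> a x y; rewrite /f ipDl ipZl ReD Re_realM.
have pb : pointwise_bounded F.
  move=> x; set w := oproj ip M x; have Mw : M w by exact: oproj_in.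
  exists (rnorm (g w)) => _ [u [Mu u1] <-]; rewrite /f.
  rewrite (ip_oprojl ip hM x (Mg Mu)) -/w -(compression_inv_sym hD hS hMc Mw Mu).
  apply: le_trans (Re_norm_le _) _; apply: le_trans (cauchy_schwarz ip _ _) _.
  by rewrite -[leRHS]mulr1 ler_wpM2l ?rnorm_ge0.
have [C FC] := Banach_Steinhauss hF pb 1; exists C => u Mu u1.
have Fu : F (f u) by exists u.
have [->|gu0] := eqVneq (g u) 0.
  by rewrite /rnorm normr0; apply: le_trans (FC _ Fu 0 _); rewrite ?normr0.
have gu := rnorm_gt0 gu0; set c := (rnorm (g u))^-1.
have cg1 : rnorm (c%:C *: g u) <= 1.
  by rewrite rnormZ_real ger0_norm ?invr_ge0 ?rnorm_ge0 // mulVf ?gt_eqF.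
have := FC _ Fu (c%:C *: g u : H); rewrite /f ipZl ipxx -realcM /= ger0_norm; last first.
  by rewrite mulr_ge0 ?invr_ge0 ?rnorm_ge0 ?sqr_ge0.
by rewrite /c expr2 mulrA mulVf ?gt_eqF // mul1r; apply.
Qed.

Lemma compression_inv_bounded : exists C, forall u, M u -> rnorm (g u) <= C * rnorm u.
Proof.
have [C gC] := compression_inv_unit_bounded; exists C => u Mu.
have [->|u0] := eqVneq u 0; first by rewrite (compression_inv0 hD hS hMc) /rnorm !normr0 mulr0.
have uu := rnorm_gt0 u0; set c := (rnorm u)^-1.
have Mcu : M (c%:C *: u) by apply: (subspaceZ hM.1).
have := gC _ Mcu; rewrite rnormZ_real ger0_norm ?invr_ge0 ?rnorm_ge0 // mulVf ?gt_eqF //.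
have -> : g (c%:C *: u) = c%:C *: g u.
  rewrite -[_ *: u]addr0 (compression_inv_lin hD hS hMc _ Mu (subspace0 hM.1)).
  by rewrite (compression_inv0 hD hS hMc) addr0.
rewrite rnormZ_real ger0_norm ?invr_ge0 ?rnorm_ge0 // => /(_ (lexx _)).
by rewrite mulrC -ler_pdivrMr.
Qed.

End CompressionInverseBound.

Section ObliqueProjection.
Variables (R : realType) (H : completeNormedModType R[i]) (ip : inner_product H).
Variables (D : H -> H) (S : set H).
Hypothesis hD : positive_op ip D.
Hypothesis hS : closed_subspace S.
Local Notation PS := (oproj ip S).
Local Notation M := (compression_range ip D S).
Hypothesis hMc : closed M.
Local Notation g := (compression_inv ip D S).

Definition dfactor (y : H) : H := g (PS (D y)).
Definition oblique_proj (x : H) : H := PS x + dfactor (x - PS x).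
Local Notation d := dfactor.
Local Notation Q := oblique_proj.

Let hM : closed_subspace M := conj (compression_range_subspace hD hS) hMc.

Lemma dfactor_in_range y : M (d y).
Proof. exact: (compression_invP hD hS hMc (oproj_posop_in_range hD hS hMc y)).1. Qed.

Lemma dfactor_S y : S (d y).
Proof. by apply: (compression_range_S hS); exact: dfactor_in_range. Qed.

Lemma oproj_posop_dfactor y : PS (D (d y)) = PS (D y).
Proof. exact: (compression_invP hD hS hMc (oproj_posop_in_range hD hS hMc y)).2. Qed.

Lemma dfactor_lin a x y : d (a *: x + y) = a *: d x + d y.
Proof.
rewrite /d (oproj_posop_lin hD hS) (compression_inv_lin hD hS hMc) //;
  exact: oproj_posop_in_range.
Qed.

Lemma dfactor0 : d 0 = 0.
Proof. by rewrite /d (oproj_posop0 hD hS) (compression_inv0 hD hS hMc). Qed.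

Lemma continuous_dfactor : continuous d.
Proof.
have [C gC] := compression_inv_bounded hD hS hMc.
apply: (lipschitz_on_comp_continuous (M := M) (C := C)).
- by move=> x; apply: continuous_comp; [exact: hD.1.2 | exact: continuous_oproj].
- exact: oproj_posop_in_range.
- move=> u v Mu Mv; rewrite -(compression_invB hD hS hMc Mu Mv).
  exact/gC/(subspaceB hM.1).
Qed.

Lemma oblique_proj_S x : S (Q x).
Proof. exact: (subspaceD hS.1 (oproj_in ip hS x) (dfactor_S _)). Qed.

Lemma oblique_proj_id s : S s -> Q s = s.
Proof. by move=> Ss; rewrite /Q (oproj_id ip hS Ss) subrr dfactor0 addr0. Qed.

Lemma oblique_proj_eq0 x : PS x = 0 -> PS (D x) = 0 -> Q x = 0.
Proof.
by move=> Px PDx; rewrite /Q /d Px subr0 PDx add0r (compression_inv0 hD hS hMc).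
Qed.

Lemma oblique_proj_lin a x y : Q (a *: x + y) = a *: Q x + Q y.
Proof.
rewrite /Q (oproj_lin ip hS).
have -> : a *: x + y - (a *: PS x + PS y) = a *: (x - PS x) + (y - PS y).
  by rewrite scalerBr opprD addrACA.
by rewrite dfactor_lin scalerDr addrACA.
Qed.

Lemma oproj_posop_oblique x : PS (D (Q x)) = PS (D x).
Proof.
have PSDD u v : PS (D (u + v)) = PS (D u) + PS (D v).
  by rewrite -[u]scale1r (oproj_posop_lin hD hS) !scale1r.
by rewrite /Q PSDD oproj_posop_dfactor -PSDD addrC subrK.
Qed.

(* Q is D-selfadjoint: both sides only see the S-components of D Q x and
   D Q y, which are those of D x and D y. *)
Lemma oblique_proj_sym x y : ip (D (Q x)) y = ip (D x) (Q y).
Proof.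
have Sx := oblique_proj_S x; have Sy := oblique_proj_S y.
rewrite (posop_sym hD) (ip_oprojr ip hS _ Sx) -(oproj_posop_oblique y).
rewrite -(ip_oprojr ip hS _ Sx) -(posop_sym hD) (ip_oprojl ip hS _ Sy).
by rewrite oproj_posop_oblique -(ip_oprojl ip hS _ Sy).
Qed.

Lemma continuous_oblique_proj : continuous Q.
Proof.
move=> x; apply: continuousD; first exact: continuous_oproj.
apply: (continuous_comp (f := fun z => z - PS z)); last exact: continuous_dfactor.
by apply: continuousB; [exact: cvg_id | exact: continuous_oproj].
Qed.

End ObliqueProjection.

Section ObliqueProjectionIn.
Variables (R : realType) (H : completeNormedModType R[i]) (ip : inner_product H).
Variables (D : H -> H) (S : set H).
Hypothesis hD : positive_op ip D.
Hypothesis hS : closed_subspace S.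
Local Notation PS := (oproj ip S).
Local Notation M := (compression_range ip D S).
Hypothesis hMc : closed M.
Local Notation d := (dfactor ip D S).
Local Notation Q := (oblique_proj ip D S).

Variables (K : set H) (D' : H -> H).
Hypothesis hK : Defs.subspace K.
Hypothesis SK : S `<=` K.
Hypothesis D'D : forall x y, K x -> K y -> ip (D' x) y = ip (D x) y.

Lemma oproj_agree z : K z -> PS (D' z) = PS (D z).
Proof.
move=> Kz; apply: oproj_eq hS.1 (oproj_in ip hS _) _ => m Sm.
have Km := SK Sm.
by rewrite ipBl D'D // (ip_oprojl ip hS _ Sm) subrr.
Qed.

Lemma compression_range_agree : [set PS (D' s) | s in S] = M.
Proof.
by apply/seteqP; split=> _ [s Ss <-]; exists s => //; rewrite oproj_agree //; exact: SK.
Qed.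

Lemma dfactor_in_dfactor : dfactor_in ip K D' S d.
Proof.
split.
- split; first by move=> y _; exact: dfactor_S.
  split; first by move=> a x y _ _; exact: dfactor_lin.
  exact/continuous_subspaceT/continuous_dfactor.
- move=> y [Ky _]; have Kdy := SK (dfactor_S hD hS hMc y).
  by rewrite !oproj_agree // oproj_posop_dfactor.
- by move=> y _; apply: subset_closure; rewrite compression_range_agree; exact: dfactor_in_range.
Qed.

Lemma dfactor_in_unique d' : dfactor_in ip K D' S d' ->
  forall y, (K `&` orth ip S) y -> d' y = d y.
Proof.
move=> [[d'S _] d'D d'M] y [Ky yS].
have Md' : M (d' y).
  by rewrite ((closure_id M).1 hMc) -compression_range_agree; exact: d'M.
apply/eqP; rewrite -subr_eq0; apply/eqP; apply: (compression_inj hD hS).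
  exact: (subspaceB (compression_range_subspace hD hS)) (dfactor_in_range _ _ _ y).
have Kd'y : K (d' y) by apply/SK/d'S.
rewrite (oproj_posopB hD hS) -(oproj_agree Kd'y) d'D //.
by rewrite (oproj_agree Ky) (oproj_posop_dfactor hD hS hMc) subrr.
Qed.

Lemma PDS_in_oblique_proj x : K x -> PDS_in ip K D' S x = Q x.
Proof.
move=> Kx; rewrite /PDS_in /oblique_proj /=; set d' := epsilon _ _.
have hd' : dfactor_in ip K D' S d' := epsilon_spec _ _ (ex_intro _ _ dfactor_in_dfactor).
rewrite (dfactor_in_unique hd') //; split; last exact: oproj_orth.
exact/(subspaceB hK)/SK/(oproj_in ip hS).
Qed.

Lemma compatible_in_oblique_proj : compatible_in ip K D' S.
Proof.
have QS := oblique_proj_S hD hS hMc; have Qid := oblique_proj_id hD hS hMc.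
exists Q; split.
- split; first by move=> x _; apply: SK.
  split; first by move=> a x y _ _; exact: oblique_proj_lin.
  exact/continuous_subspaceT/continuous_oblique_proj.
- by move=> x _; rewrite Qid.
- apply/seteqP; split=> [_ [x _ <-] //|s Ss].
  by exists s; [exact: SK | rewrite Qid].
- move=> x y Kx Ky; have KQx := SK (QS x); have KQy := SK (QS y).
  by rewrite !D'D // (oblique_proj_sym hD hS hMc).
Qed.

End ObliqueProjectionIn.

Theorem proposition2p10 (R : realType) (H : completeNormedModType R[i])
  (ip : inner_product H) (D : H -> H) (S T : set H) :
  positive_op ip D ->
  closed_subspace S -> closed_subspace T -> S `<=` T ->
  (forall x, oproj ip T (D x) = D (oproj ip T x)) ->
  closed (range (fun x => oproj ip S (D (oproj ip S x)))) ->
  let D1 := fun x => oproj ip T (D x) in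
  [/\ compatible_in ip setT D S,
      compatible_in ip T D1 S,
      (forall x, T x -> PDS_in ip setT D S x = PDS_in ip T D1 S x) &
      (forall x, orth ip T x -> PDS_in ip setT D S x = 0)].
Proof.
move=> hD hS hT ST DT Mc D1.
have hMc : closed (compression_range ip D S) by rewrite (compression_rangeE ip D hS).
have hH : Defs.subspace (@setT H) by [].
have DD x y : setT x -> setT y -> ip (D x) y = ip (D x) y by [].
have D1D x y : T x -> T y -> ip (D1 x) y = ip (D x) y.
  by move=> _ Ty; rewrite /D1 -(ip_oprojl ip hT _ Ty).
have PDS_H := PDS_in_oblique_proj hD hS hMc hH (fun _ _ => I) DD.
have PDS_T := PDS_in_oblique_proj hD hS hMc hT.1 ST D1D.
split.
- exact: (compatible_in_oblique_proj (K := setT) hD hS hMc (fun _ _ => I) DD).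
- exact: (compatible_in_oblique_proj (D' := D1) hD hS hMc ST D1D).
- by move=> x Tx; rewrite PDS_H // PDS_T.
- move=> x xT; rewrite PDS_H //; apply: (oblique_proj_eq0 hD hS hMc).
    by apply: (oproj_eq0 hS) => m Sm; apply/xT/ST.
  have DxT : orth ip T (D x).
    by have := oproj_orth ip hT (D x); rewrite DT (oproj_eq0 hT xT) (posop0 hD) subr0.
  by apply: (oproj_eq0 hS) => m Sm; apply/DxT/ST.
Qed.
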